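(* Let $0<a<b$, let $\alpha\in(0,1)$, let $k:[a,b]\to\mathbb{R}$ be a continuous nonnegative map, differentiable at every $t>a$, with $k(t)\neq 0$ and $k'(t)\neq 0$ whenever $t>a$. Let $f:[a,b]\to\mathbb{R}$ be continuous on $[a,b]$, $\alpha$-differentiable at every point of $(a,b)$, and suppose $f(a)=f(b)$. Then there exists $c\in(a,b)$ such that $D^{\alpha}(f)(c)=0$.
   Context: For $k$ as in the claim, $f:[a,b]\to\mathbb{R}$, $\alpha\in(0,1]$ and $t\in(a,b)$, the generalized fractional derivative of $f$ of order $\alpha$ at $t$ is $$D^{\alpha}(f)(t)=f^{(\alpha)}(t):=\lim_{\varepsilon\to 0}\frac{f\left(t-k(t)+k(t)\,e^{\varepsilon\frac{(k(t))^{-\alpha}}{k'(t)}}\right)-f(t)}{\varepsilon},$$ and $f$ is called $\alpha$-differentiable at $t$ if this limit exists. *)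

From Stdlib Require Import Reals.
From Coquelicot Require Import Coquelicot.
Open Scope R_scope.

Definition frac_quot (k : R -> R) (alpha : R) (f : R -> R) (t : R) (eps : R) : R :=
  (f (t - k t + k t * exp (eps * Rpower (k t) (- alpha) / Derive k t)) - f t) / eps.

Definition alpha_differentiable (k : R -> R) (alpha : R) (f : R -> R) (t : R) : Prop :=
  exists l : R, is_lim (frac_quot k alpha f t) 0 l.

(* D^alpha(f)(t) = lim_{eps -> 0} frac_quot (meaningful when alpha_differentiable). *)
Definition gen_frac_deriv (k : R -> R) (alpha : R) (f : R -> R) (t : R) : R :=
  real (Lim (frac_quot k alpha f t) 0).

Definition continuous_on_closed (a b : R) (g : R -> R) : Prop :=
  forall t, a <= t <= b ->
    filterlim g (within (fun x => a <= x <= b) (locally t)) (locally (g t)).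

(* The fractional quotient at t is the ordinary difference quotient of f along
   the curve eps |-> t - k t + k t * exp (eps * (k t)^(-alpha) / k'(t)), which
   passes continuously through t at eps = 0.  At an interior extremum of f the
   numerator therefore keeps one sign near eps = 0, so the quotient changes sign
   with eps and its limit can only be 0 (Fermat).  Rolle's argument, via the
   extreme value theorem and f a = f b, provides an interior extremum. *)
From Stdlib Require Import Reals Lra.
From Coquelicot Require Import Coquelicot.
Open Scope R_scope.

Definition local_extremum (f : R -> R) (c : R) : Prop :=
  locally c (fun y => f y <= f c) \/ locally c (fun y => f c <= f y).

Lemma is_lim_eq0_of_sign_change (q : R -> R) (l : R) :
  at_right 0 (fun e => q e <= 0) -> at_left 0 (fun e => 0 <= q e) ->
  is_lim q 0 l -> l = 0.
Proof.
  intros Hright Hleft Hl.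
  assert (right_le : filter_le (at_right 0) (locally' 0)).
  { intros P HP. unfold at_right, within.
    eapply filter_imp; [|exact HP]. intros x HPx Hx. apply HPx. lra. }
  assert (left_le : filter_le (at_left 0) (locally' 0)).
  { intros P HP. unfold at_left, within.
    eapply filter_imp; [|exact HP]. intros x HPx Hx. apply HPx. lra. }
  assert (l_le0 : l <= 0).
  { apply (closed_filterlim_loc (F := at_right 0) q _ l
             (filterlim_filter_le_1 _ right_le Hl) Hright (closed_le 0)). }
  assert (l_ge0 : 0 <= l).
  { apply (closed_filterlim_loc (F := at_left 0) q _ l
             (filterlim_filter_le_1 _ left_le Hl) Hleft (closed_ge 0)). }
  lra.
Qed.

Lemma is_lim_diff_quot_local_max (f p : R -> R) (c l : R) :
  filterlim p (locally 0) (locally c) -> locally c (fun y => f y <= f c) ->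
  is_lim (fun e => (f (p e) - f c) / e) 0 l -> l = 0.
Proof.
  intros Hp Hmax.
  assert (Hnear : locally 0 (fun e => f (p e) <= f c)) by exact (Hp _ Hmax).
  apply is_lim_eq0_of_sign_change; unfold at_right, at_left, within.
  - eapply filter_imp; [|exact Hnear]. intros e He He_pos.
    pose proof (Rinv_0_lt_compat e He_pos). unfold Rdiv. nra.
  - eapply filter_imp; [|exact Hnear]. intros e He He_neg.
    pose proof (Rinv_lt_0_compat e He_neg). unfold Rdiv. nra.
Qed.

Lemma is_lim_diff_quot_local_extremum (f p : R -> R) (c l : R) :
  filterlim p (locally 0) (locally c) -> local_extremum f c ->
  is_lim (fun e => (f (p e) - f c) / e) 0 l -> l = 0.
Proof.
  intros Hp [Hmax | Hmin] Hl; [exact (is_lim_diff_quot_local_max f p c l Hp Hmax Hl)|].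
  assert (Hopp : - l = 0).
  { apply (is_lim_diff_quot_local_max (fun y => - f y) p c); [exact Hp | |].
    - eapply filter_imp; [|exact Hmin]. intros y Hy. lra.
    - apply (is_lim_ext (fun e => - ((f (p e) - f c) / e))).
      + intros e. unfold Rdiv. ring.
      + exact (is_lim_opp _ _ (Finite l) Hl). }
  lra.
Qed.

Definition frac_curve (k : R -> R) (alpha t eps : R) : R :=
  t - k t + k t * exp (eps * Rpower (k t) (- alpha) / Derive k t).

Lemma frac_quotE (k f : R -> R) (alpha t eps : R) :
  frac_quot k alpha f t eps = (f (frac_curve k alpha t eps) - f t) / eps.
Proof. reflexivity. Qed.

Lemma frac_curve_cvg (k : R -> R) (alpha t : R) :
  filterlim (frac_curve k alpha t) (locally 0) (locally t).
Proof.
  assert (Ht : frac_curve k alpha t 0 = t).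
  { unfold frac_curve. rewrite Rmult_0_l, Rdiv_0_l, exp_0. ring. }
  assert (Hcont : continuous (frac_curve k alpha t) 0).
  { apply (ex_derive_continuous (K := R_AbsRing) (V := R_NormedModule)).
    unfold frac_curve. auto_derive. exact I. }
  unfold continuous in Hcont. rewrite Ht in Hcont. exact Hcont.
Qed.

Lemma gen_frac_deriv_local_extremum (k f : R -> R) (alpha t : R) :
  alpha_differentiable k alpha f t -> local_extremum f t ->
  gen_frac_deriv k alpha f t = 0.
Proof.
  intros [l Hl] Hext.
  unfold gen_frac_deriv. rewrite (is_lim_unique _ _ _ Hl). simpl.
  apply (is_lim_diff_quot_local_extremum f (frac_curve k alpha t) t l
           (frac_curve_cvg k alpha t) Hext).
  exact (is_lim_ext _ _ _ _ (frac_quotE k f alpha t) Hl).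
Qed.

Definition clamp (a b x : R) : R := Rmax a (Rmin b x).

Lemma clamp_in (a b x : R) : a <= b -> a <= clamp a b x <= b.
Proof. intros. unfold clamp, Rmax, Rmin. repeat destruct Rle_dec; lra. Qed.

Lemma clamp_id (a b x : R) : a <= x <= b -> clamp a b x = x.
Proof. intros. unfold clamp, Rmax, Rmin. repeat destruct Rle_dec; lra. Qed.

Lemma clamp_lipschitz (a b x y : R) :
  Rabs (clamp a b y - clamp a b x) <= Rabs (y - x).
Proof.
  unfold clamp, Rmax, Rmin, Rabs.
  repeat destruct Rle_dec; repeat destruct Rcase_abs; lra.
Qed.

Lemma filterlim_clamp_within (a b x : R) : a <= b ->
  filterlim (clamp a b) (locally x)
    (within (fun y => a <= y <= b) (locally (clamp a b x))).
Proof.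
  intros Hab P [eps HP].
  exists eps. intros y Hy. apply HP; [|exact (clamp_in a b y Hab)].
  change (Rabs (y - x) < eps) in Hy.
  change (Rabs (clamp a b y - clamp a b x) < eps).
  pose proof (clamp_lipschitz a b x y). lra.
Qed.

(* f is only continuous within [a, b]; composing with the clamp gives a function
   continuous on all of R that agrees with f on [a, b]. *)
Lemma continuous_on_closed_extreme_values (a b : R) (f : R -> R) :
  a <= b -> continuous_on_closed a b f ->
  (exists M, a <= M <= b /\ forall y, a <= y <= b -> f y <= f M) /\
  (exists m, a <= m <= b /\ forall y, a <= y <= b -> f m <= f y).
Proof.
  intros Hab Hf.
  assert (Hcont : forall x, a <= x <= b -> continuity_pt (fun y => f (clamp a b y)) x).
  { intros x _. apply continuity_pt_filterlim.
    exact (filterlim_comp _ _ _ _ _ _ _ _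
             (filterlim_clamp_within a b x Hab) (Hf _ (clamp_in a b x Hab))). }
  assert (Hclamp : forall y, a <= y <= b -> f (clamp a b y) = f y).
  { intros y Hy. now rewrite clamp_id. }
  split.
  - destruct (continuity_ab_maj _ a b Hab Hcont) as [M [HM HMab]].
    exists M. split; [exact HMab|]. intros y Hy.
    rewrite <- (Hclamp y Hy), <- (Hclamp M HMab). exact (HM y Hy).
  - destruct (continuity_ab_min _ a b Hab Hcont) as [m [Hm Hmab]].
    exists m. split; [exact Hmab|]. intros y Hy.
    rewrite <- (Hclamp y Hy), <- (Hclamp m Hmab). exact (Hm y Hy).
Qed.

Lemma interior_max_local_extremum (a b c : R) (f : R -> R) :
  a < c < b -> (forall y, a <= y <= b -> f y <= f c) -> local_extremum f c.
Proof.
  intros Hc Hmax. left.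
  assert (Hpos : 0 < Rmin (c - a) (b - c)) by (apply Rmin_glb_lt; lra).
  exists (mkposreal _ Hpos). intros y Hy. apply Hmax.
  change (Rabs (y - c) < Rmin (c - a) (b - c)) in Hy.
  pose proof (Rmin_l (c - a) (b - c)). pose proof (Rmin_r (c - a) (b - c)).
  apply Rabs_def2 in Hy. lra.
Qed.

Lemma interior_min_local_extremum (a b c : R) (f : R -> R) :
  a < c < b -> (forall y, a <= y <= b -> f c <= f y) -> local_extremum f c.
Proof.
  intros Hc Hmin.
  assert (Hmax : forall y, a <= y <= b -> - f y <= - f c).
  { intros y Hy. specialize (Hmin y Hy). lra. }
  destruct (interior_max_local_extremum a b c (fun y => - f y) Hc Hmax) as [H | H].
  - right. eapply filter_imp; [|exact H]. intros y. lra.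
  - left. eapply filter_imp; [|exact H]. intros y. lra.
Qed.

Lemma interior_or_endpoint_value (a b x : R) (f : R -> R) :
  a <= x <= b -> f a = f b -> a < x < b \/ f x = f a.
Proof.
  intros Hx Hfab.
  destruct (Req_dec x a) as [-> | Ha]; [now right|].
  destruct (Req_dec x b) as [-> | Hb]; [now right | left; lra].
Qed.

Lemma rolle_local_extremum (a b : R) (f : R -> R) :
  a < b -> continuous_on_closed a b f -> f a = f b ->
  exists c, a < c < b /\ local_extremum f c.
Proof.
  intros Hab Hf Hfab.
  destruct (continuous_on_closed_extreme_values a b f (Rlt_le _ _ Hab) Hf)
    as [[M [HMab HM]] [m [Hmab Hm]]].
  destruct (interior_or_endpoint_value a b M f HMab Hfab) as [HM_in | HM_end].
  { exists M. split; [exact HM_in|]. exact (interior_max_local_extremum a b M f HM_in HM). }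
  destruct (interior_or_endpoint_value a b m f Hmab Hfab) as [Hm_in | Hm_end].
  { exists m. split; [exact Hm_in|]. exact (interior_min_local_extremum a b m f Hm_in Hm). }
  (* Both extreme values equal f a, so f is constant on [a, b]. *)
  exists ((a + b) / 2). split; [lra|].
  apply (interior_max_local_extremum a b); [lra|]. intros y Hy.
  pose proof (HM y Hy). pose proof (Hm ((a + b) / 2) ltac:(lra)). lra.
Qed.

Theorem mainTheorem4 (a b alpha : R) (k f : R -> R)
  (hab : 0 < a < b) (halpha : 0 < alpha < 1)
  (hk_cont : continuous_on_closed a b k)
  (hk_nonneg : forall t, a <= t <= b -> 0 <= k t)
  (hk_diff : forall t, a < t < b -> ex_derive k t)
  (hk_ne0 : forall t, a < t <= b -> k t <> 0)
  (hk'_ne0 : forall t, a < t < b -> Derive k t <> 0)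
  (hf_cont : continuous_on_closed a b f)
  (hf_adiff : forall t, a < t < b -> alpha_differentiable k alpha f t)
  (hfab : f a = f b) :
  exists c, a < c < b /\ gen_frac_deriv k alpha f c = 0.
Proof.
  destruct (rolle_local_extremum a b f (proj2 hab) hf_cont hfab) as [c [Hc Hext]].
  exists c. split; [exact Hc|].
  exact (gen_frac_deriv_local_extremum k f alpha c (hf_adiff c Hc) Hext).
Qed.
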